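(* Let $H=(V_H,E_H)$ be a directed graph, let $k,\ell\in V_H$ with $k\ne\ell$, and let $j$ be a positive integer. Assume $H$ has no edges outgoing from $\ell$, and let $K$ be the graph obtained from $H$ by removing all edges outgoing from $k$. Then $$\mathcal F_j^{k,\ell}(H)=\bigcup_{i:\,(k\to i)\in E_H}\left\{(V_H,\,E_F\cup\{k\to i\})\ :\ F\in\mathcal F_{j-1}^{i,\ell}(K)\right\}.$$
   Context: Graphs are finite directed (multi)graphs. A spanning incoming forest of a graph is a spanning subgraph (containing all vertices) whose underlying undirected graph has no cycles and in which each node has at most one outgoing edge. $\mathcal F_j^{a,b}(H)$ denotes the set of spanning incoming forests of $H$ with exactly $j$ edges such that some connected component (of the underlying undirected graph) contains both $a$ and $b$ (when $a=b$ this is all $j$-edge spanning incoming forests). $E_F$ denotes the edge set of $F$. *)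

From mathcomp Require Import all_boot.
Set Implicit Arguments. Unset Strict Implicit. Unset Printing Implicit Defensive.

(* A finite directed multigraph H is given by finite types of vertices V and
   edges E with source/target maps; the edge set of H is all of E.
   Spanning subgraphs (containing all vertices) are identified with their edge
   sets, i.e. subsets F : {set E}. *)

Section Forests.
Variables (V E : finType) (src tgt : E -> V).

Definition joins (e : E) (x y : V) : bool :=
  ((src e == x) && (tgt e == y)) || ((src e == y) && (tgt e == x)).

(* the underlying undirected graph of edge set F contains a cycle:
   distinct vertices v_0..v_{m-1} (m >= 1) and distinct edges e_0..e_{m-1}
   of F, with e_t joining v_t and v_{(t+1) mod m}.  (Loops give m = 1,
   parallel edges give m = 2.) *)
Definition has_undirected_cycle (F : {set E}) : Prop :=
  exists (es : seq E) (vs : seq V) (e0 : E) (v0 : V),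
    [/\ size es = size vs, 0 < size es, uniq es, uniq vs &
        {subset es <= F}] /\
        forall t, t < size es ->
          joins (nth e0 es t) (nth v0 vs t) (nth v0 vs ((t.+1) %% size vs)).

Definition outdeg_le1 (F : {set E}) : Prop :=
  forall x : V, #|[set e in F | src e == x]| <= 1.

Definition spanning_incoming_forest (D F : {set E}) : Prop :=
  [/\ F \subset D, ~ has_undirected_cycle F & outdeg_le1 F].

Definition same_component (F : {set E}) (a b : V) : bool :=
  connect [rel x y | [exists e in F, joins e x y]] a b.

Definition in_Fj (j : nat) (a b : V) (D F : {set E}) : Prop :=
  [/\ spanning_incoming_forest D F, #|F| = j & same_component F a b].

End Forests.

(* In an edge set of out-degree at most one, two distinct sinks never lie in a
   common undirected component: along a simple undirected path leaving a sink
   every edge is forced to point backwards, so the last vertex has an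
   out-edge.  As l is a sink, a forest joining k and l must therefore contain
   the out-edge e of k, and its simple k-l path leaves k through e, so deleting
   e keeps tgt e joined to l.  Conversely, adding e to a forest F of K cannot
   close a cycle, since the rest of that cycle would join the sinks k and l
   in F. *)

From mathcomp Require Import all_boot zify.
Set Implicit Arguments. Unset Strict Implicit. Unset Printing Implicit Defensive.

Lemma connect_chain (T : finType) (r : rel T) (w : nat -> T) (a b : nat) :
  a <= b -> (forall c, a <= c < b -> r (w c) (w c.+1)) -> connect r (w a) (w b).
Proof.
elim: b => [|b IHb]; first by rewrite leqn0 => /eqP ->.
rewrite leq_eqVlt ltnS => /predU1P[-> //| ab] step.
apply: connect_trans (IHb ab _) (connect1 (step b _)); last by rewrite ab ltnSn.
by move=> c /andP[ac cb]; rewrite step // ac ltnS ltnW.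
Qed.

Lemma modn_neq_in_window (m t c : nat) : t < m -> t < c < t + m -> c %% m != t.
Proof.
move=> tm /andP[tc cm]; apply/eqP => ct.
by have := divn_eq c m; rewrite ct; case: (c %/ m) => [|q]; lia.
Qed.

Section Forests.
Variables (V E : finType) (src tgt : E -> V).
Implicit Types (F G : {set E}) (e f : E) (x y : V).

Definition adjacent F : rel V := [rel x y | [exists e in F, joins src tgt e x y]].

Definition sink F x : Prop := {in F, forall e, src e != x}.

Lemma joinsC e x y : joins src tgt e x y = joins src tgt e y x.
Proof. by rewrite /joins orbC. Qed.

Lemma adjacent_sym F : symmetric (adjacent F).
Proof.
by move=> x y; apply/existsP/existsP => -[e /andP[eF J]]; exists e; rewrite eF joinsC.
Qed.

Lemma connect_adjacentS F G x y :
  F \subset G -> connect (adjacent F) x y -> connect (adjacent G) x y.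
Proof.
move=> sFG; apply: connect_sub => u v /existsP[e /andP[eF J]].
by apply/connect1/existsP; exists e; rewrite (subsetP sFG).
Qed.

Lemma outdeg_le1P F : outdeg_le1 src F <-> {in F &, injective src}.
Proof.
split=> [le1 e f eF fF efsrc | inj x].
  by move/card_le1_eqP: (le1 (src e)) => /(_ f e); apply; rewrite inE ?eF ?fF efsrc eqxx.
apply/card_le1_eqP => e f; rewrite !inE => /andP[eF /eqP <-] /andP[fF /eqP].
exact: inj.
Qed.

Lemma outdeg_le1S F G : F \subset G -> outdeg_le1 src G -> outdeg_le1 src F.
Proof.
move=> sFG /outdeg_le1P injG; apply/outdeg_le1P => e f eF fF.
by apply: injG; apply: (subsetP sFG).
Qed.

Lemma has_undirected_cycleS F G :
  F \subset G -> has_undirected_cycle src tgt F -> has_undirected_cycle src tgt G.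
Proof.
move=> sFG [es [vs [e0 [v0 [[sz pos U Uv esF] J]]]]].
exists es, vs, e0, v0; split=> //; split=> // e /esF; exact: (subsetP sFG).
Qed.

Lemma sink_setD1 G e : outdeg_le1 src G -> e \in G -> sink (G :\ e) (src e).
Proof.
move=> /outdeg_le1P injG eG f; rewrite in_setD1 => /andP[fe fG].
by apply: contra fe => /eqP/injG ->.
Qed.

(* Every edge of the path is forced to point backwards, towards x. *)
Lemma simple_path_last_out_edge F x p :
  outdeg_le1 src F -> path (adjacent F) x p -> uniq (x :: p) -> p != [::] ->
  {in F, forall f, src f = x -> tgt f \notin p} ->
  exists2 f, f \in F & src f = last x p.
Proof.
move/outdeg_le1P=> injF; elim: p x => [|y p IHp] x //= /andP[/existsP[f /andP[fF J]] Pp].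
case/andP=> xNyp Uyp _ x_out.
have [srcf tgtf] : src f = y /\ tgt f = x.
  case/orP: J => /andP[/eqP sf /eqP tf]; last by [].
  by move: (x_out f fF sf); rewrite tf mem_head.
case: p => [|z p] in IHp Pp Uyp xNyp x_out *; first by exists f.
apply: IHp => // g gF srcg; rewrite (injF g f) ?srcg ?srcf // tgtf.
by move: xNyp; rewrite inE negb_or => /andP[].
Qed.

Lemma sinks_disconnected F a b :
  outdeg_le1 src F -> a != b -> sink F a -> sink F b ->
  ~~ same_component src tgt F a b.
Proof.
move=> le1 ab a_sink b_sink; apply/negP => /connectP[p0 /shortenP[p Pp U _ bE]].
case: p Pp U bE => [|y p] Pp U bE; first by rewrite bE eqxx in ab.
have [|f fF srcf] := simple_path_last_out_edge le1 Pp U isT.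
  by move=> f fF srcf; move: (a_sink f fF); rewrite srcf eqxx.
by move: (b_sink f fF); rewrite bE srcf eqxx.
Qed.

(* The cycle minus e, read from the vertex after e around to the vertex before
   it, is a walk in F between the endpoints of e. *)
Lemma has_undirected_cycle_setU1 F e :
  has_undirected_cycle src tgt (F :|: [set e]) ->
  has_undirected_cycle src tgt F \/ connect (adjacent F) (src e) (tgt e).
Proof.
move=> [es [vs [e0 [v0 [[sz pos U Uv esFe] J]]]]].
have [e_es|eNes] := boolP (e \in es); last first.
  left; exists es, vs, e0, v0; split=> //; split=> // f f_es.
  move: (esFe f f_es); rewrite !inE => /orP[//|/eqP fe].
  by move: f_es; rewrite fe (negbTE eNes).
right; set m := size es; set t := index e es.
have tm : t < m by rewrite index_mem.
pose w c := nth v0 vs (c %% m).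
have step c : t.+1 <= c < t + m -> adjacent F (w c) (w c.+1).
  move=> window; have ct := modn_neq_in_window tm window.
  have cm : c %% m < m by rewrite ltn_mod (leq_ltn_trans (leq0n t)).
  apply/existsP; exists (nth e0 es (c %% m)); apply/andP; split.
    move: (esFe _ (mem_nth e0 cm)); rewrite !inE => /orP[//|/eqP ce].
    by move: ct; rewrite /t -ce index_uniq ?eqxx.
  by have := J _ cm; rewrite /w -sz -addn1 modnDml addn1.
have tmt : t.+1 <= t + m by rewrite -addn1 leq_add2l.
have := connect_chain tmt step.
have := J t tm; rewrite nth_index // -sz -/m /w (addnC t) modnDl (modn_small tm).
have adj_csym := sym_connect_sym (adjacent_sym F).
by case/orP=> /andP[/eqP <- /eqP <-]; rewrite // adj_csym.
Qed.

Lemma path_setD1 G e x p :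
  path (adjacent G) x p -> src e \notin x :: p -> path (adjacent (G :\ e)) x p.
Proof.
elim: p x => [|y p IHp] x //= /andP[/existsP[f /andP[fG J]] Pp].
rewrite !inE !negb_or => /and3P[ex ey eNp].
have Pp' : path (adjacent (G :\ e)) y p by apply: IHp; rewrite // inE negb_or ey.
rewrite Pp' andbT; apply/existsP; exists f.
rewrite in_setD1 fG J !andbT; apply: contraNneq ex => fe.
move: J; rewrite fe /joins => /orP[/andP[-> _] // | /andP[/eqP ye _]].
by rewrite ye eqxx in ey.
Qed.

Variables (k l : V).
Hypotheses (kl : k != l) (l_sink : forall e, src e != l).

Lemma out_edge_of_component G :
  outdeg_le1 src G -> same_component src tgt G k l -> exists2 e, e \in G & src e = k.
Proof.
move=> le1 conn.
have [/existsP[e /andP[eG /eqP ek]]|noout] := boolP [exists e in G, src e == k].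
  by exists e.
have k_sink : sink G k.
  by move=> e eG; apply: contra noout => ek; apply/existsP; exists e; rewrite eG.
by have := sinks_disconnected le1 kl k_sink (fun e _ => l_sink e); rewrite conn.
Qed.

Lemma same_component_setD1 G e :
  outdeg_le1 src G -> e \in G -> src e = k ->
  same_component src tgt G k l -> same_component src tgt (G :\ e) (tgt e) l.
Proof.
move=> le1 eG ek /connectP[p0 /shortenP[p Pp U _ lE]].
case: p Pp U lE => [|y p] /= Pp U lE; first by move: kl; rewrite lE eqxx.
case/andP: Pp => /existsP[f /andP[fG J]] Pp; case/andP: U => kNyp _.
have yl : same_component src tgt (G :\ e) y l.
  by apply/connectP; exists p; first apply: path_setD1; rewrite ?ek.
have [fe|fNe] := eqVneq f e.
  move: J; rewrite fe /joins ek eqxx /= => /orP[/eqP -> // | /andP[/eqP yk _]].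
  by rewrite yk mem_head in kNyp.
have k_sink : sink (G :\ e) k by rewrite -ek; apply: sink_setD1.
have le1' := outdeg_le1S (subD1set G e) le1.
have := sinks_disconnected le1' kl k_sink (fun f _ => l_sink f).
by rewrite /same_component (connect_trans _ yl) //; apply/connect1/existsP; exists f;
  rewrite in_setD1 fNe fG.
Qed.

Lemma in_Fj_setD1 j G e :
  e \in G -> src e = k -> in_Fj src tgt j k l setT G ->
  in_Fj src tgt j.-1 (tgt e) l [set f | src f != k] (G :\ e).
Proof.
move=> eG ek [[_ acyclic le1] card conn].
have sGeG := subD1set G e.
have k_sink : sink (G :\ e) k by rewrite -ek; apply: sink_setD1.
split; [split | |].
- by apply/subsetP => f fGe; rewrite inE k_sink.
- by move/(has_undirected_cycleS sGeG).
- exact: outdeg_le1S le1.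
- by move: card; rewrite (cardsD1 e) eG add1n => <-.
- exact: same_component_setD1.
Qed.

Lemma in_Fj_setU1 j F e :
  0 < j -> src e = k -> in_Fj src tgt j.-1 (tgt e) l [set f | src f != k] F ->
  in_Fj src tgt j k l setT (F :|: [set e]).
Proof.
move=> j0 ek [[sFK acyclic le1] card conn].
have k_sink : sink F k by move=> f /(subsetP sFK); rewrite inE.
have eNF : e \notin F by apply/negP => /k_sink; rewrite ek eqxx.
have kNl := sinks_disconnected le1 kl k_sink (fun f _ => l_sink f).
split; [split | |].
- exact: subsetT.
- case/has_undirected_cycle_setU1 => [//|ke]; case/negP: kNl.
  by rewrite -ek; apply: connect_trans ke conn.
- apply/outdeg_le1P => f g; rewrite !inE.
  case/orP=> [fF|/eqP->] /orP[gF|/eqP->] //; first exact: (outdeg_le1P F).1 le1 f g fF gF.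
    by move=> fe; move: (k_sink f fF); rewrite fe ek eqxx.
  by move=> eg; move: (k_sink g gF); rewrite -eg ek eqxx.
- by rewrite setUC cardsU1 eNF card add1n prednK.
- apply: connect_trans (connect_adjacentS (subsetUl F [set e]) conn).
  by apply/connect1/existsP; exists e; rewrite !inE eqxx orbT /joins ek !eqxx.
Qed.

End Forests.

Theorem lemma2p6 (V E : finType) (src tgt : E -> V) (k l : V) (j : nat) :
  k != l -> 0 < j ->
  (forall e : E, src e != l) ->
  let EH : {set E} := setT in
  let EK : {set E} := [set e | src e != k] in
  forall G : {set E},
    in_Fj src tgt j k l EH G <->
    exists e : E, src e = k /\
      exists F : {set E}, in_Fj src tgt j.-1 (tgt e) l EK F /\ G = F :|: [set e].
Proof.
move=> kl j0 l_sink EH EK G; split=> [GinH | [e [ek [F [FinK ->]]]]].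
  have [[_ _ le1] _ conn] := GinH.
  have [e eG ek] := out_edge_of_component kl l_sink le1 conn.
  exists e; split=> //; exists (G :\ e); split; first exact: in_Fj_setD1.
  by rewrite setUC setD1K.
exact: in_Fj_setU1.
Qed.
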